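(* Let $N\ge1$, $\lambda_1,\dots,\lambda_N$ distinct, $\mu_1,\dots,\mu_N$ nonzero constants, $B=\mathrm{diag}(\mu_j)$. If $P_i,Q_i$ ($i=1,2,3$) solve the nonlinearized spatial system (defined below), then there exist $N$ integrals of motion $\alpha_0,\dots,\alpha_{N-1}$ of that system such that \[q=\sqrt2(\langle P_1,BQ_2\rangle+\langle P_2,BQ_3\rangle),\qquad r=\sqrt2(\langle P_2,BQ_1\rangle+\langle P_3,BQ_2\rangle)\] solve the $N$-th order stationary AKNS equation \[K_N+\sum_{i=0}^{N-1}\alpha_iK_i=0.\]
   Context: Potential $u=(q,r)^T$; $U(u,\lambda)=\begin{pmatrix}-2\lambda&\sqrt2 q&0\\ \sqrt2 r&0&\sqrt2 q\\ 0&\sqrt2 r&2\lambda\end{pmatrix}$. Differential polynomials $a_i,b_i,c_i$ in $q,r$ and their $x$-derivatives: $a_0=-1$, $b_0=c_0=0$, and for $i\ge0$, $a_{i+1}=\frac12\partial^{-1}(q c_{i,x}+r b_{i,x})$, $b_{i+1}=-\frac12 b_{i,x}-q a_i$, $c_{i+1}=\frac12 c_{i,x}-r a_i$ ($\partial=d/dx$), with constants of integration fixed by $a_i|_{u=0}=b_i|_{u=0}=c_i|_{u=0}=0$ for $i\ge1$. The AKNS vector fields are $K_n=(-2b_{n+1},\,2c_{n+1})^T$, $n\ge0$. Phase space $\mathbb{R}^{6N}$ with coordinates $\phi_{ij},\psi_{ij}$ ($i=1,2,3$, $j=1,\dots,N$), $P_i=(\phi_{i1},\dots,\phi_{iN})^T$,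 $Q_i=(\psi_{i1},\dots,\psi_{iN})^T$, $\langle\cdot,\cdot\rangle$ the standard inner product on $\mathbb{R}^N$. With $\tilde u=(\tilde q,\tilde r)^T$, $\tilde q=\sqrt2(\langle P_1,BQ_2\rangle+\langle P_2,BQ_3\rangle)$, $\tilde r=\sqrt2(\langle P_2,BQ_1\rangle+\langle P_3,BQ_2\rangle)$, the nonlinearized spatial system is $(\phi_{1j},\phi_{2j},\phi_{3j})^T_x=U(\tilde u,\lambda_j)(\phi_{1j},\phi_{2j},\phi_{3j})^T$, $(\psi_{1j},\psi_{2j},\psi_{3j})^T_x=-U(\tilde u,\lambda_j)^T(\psi_{1j},\psi_{2j},\psi_{3j})^T$, $j=1,\dots,N$. An integral of motion is a function of $P_i,Q_i$ constant along solutions of this system. *)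

From HB Require Import structures.
From mathcomp Require Import all_boot all_order all_algebra.
From mathcomp Require Import all_classical all_reals all_analysis.
Set Implicit Arguments. Unset Strict Implicit. Unset Printing Implicit Defensive.
Import Order.TTheory GRing.Theory Num.Theory.
Local Open Scope ring_scope.

Section DiffPoly.
Variable R : realType.

(** Differential polynomials in q, r (syntax): DQ k = q^(k), DR k = r^(k). *)
Inductive dpoly : Type :=
| DC of R
| DQ of nat
| DR of nat
| DAdd of dpoly & dpoly
| DMul of dpoly & dpoly.

(** A jet: the values (q^(k))_k and (r^(k))_k. *)
Definition jet := ((nat -> R) * (nat -> R))%type.

Fixpoint deval (J : jet) (p : dpoly) : R :=
  match p with
  | DC c => c
  | DQ k => J.1 k
  | DR k => J.2 k
  | DAdd p1 p2 => deval J p1 + deval J p2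
  | DMul p1 p2 => deval J p1 * deval J p2
  end.

Fixpoint dderiv (p : dpoly) : dpoly :=
  match p with
  | DC _ => DC 0
  | DQ k => DQ k.+1
  | DR k => DR k.+1
  | DAdd p1 p2 => DAdd (dderiv p1) (dderiv p2)
  | DMul p1 p2 => DAdd (DMul (dderiv p1) p2) (DMul p1 (dderiv p2))
  end.

Definition zero_jet : jet := (fun _ => 0, fun _ => 0).

(** (a, b, c) is the sequence of differential polynomials a_i, b_i, c_i of the
    recursion:  a_0 = -1, b_0 = c_0 = 0,
    a_{i+1} = 1/2 d^{-1}(q c_{i,x} + r b_{i,x}),
    b_{i+1} = -1/2 b_{i,x} - q a_i,  c_{i+1} = 1/2 c_{i,x} - r a_i,
    with a_i, b_i, c_i vanishing at u = 0 for i >= 1.  Equalities are equalities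
    of polynomial functions on jets (= equalities of differential polynomials). *)
Definition AKNS_hierarchy (a b c : nat -> dpoly) : Prop :=
  (forall J, deval J (a 0%N) = -1) /\
  (forall J, deval J (b 0%N) = 0) /\
  (forall J, deval J (c 0%N) = 0) /\
  forall i : nat,
    (forall J, deval J (dderiv (a i.+1)) =
       2^-1 * (J.1 0%N * deval J (dderiv (c i)) + J.2 0%N * deval J (dderiv (b i)))) /\
    (forall J, deval J (b i.+1) = - 2^-1 * deval J (dderiv (b i)) - J.1 0%N * deval J (a i)) /\
    (forall J, deval J (c i.+1) = 2^-1 * deval J (dderiv (c i)) - J.2 0%N * deval J (a i)) /\
    deval zero_jet (a i.+1) = 0 /\
    deval zero_jet (b i.+1) = 0 /\
    deval zero_jet (c i.+1) = 0.

Definition jet_at (q r : R -> R) (x : R) : jet :=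
  (fun k => derive1n k q x, fun k => derive1n k r x).

(** Components of the AKNS vector field K_n = (-2 b_{n+1}, 2 c_{n+1})^T at the jet J. *)
Definition K1 (b : nat -> dpoly) (n : nat) (J : jet) : R := - 2 * deval J (b n.+1).
Definition K2 (c : nat -> dpoly) (n : nat) (J : jet) : R := 2 * deval J (c n.+1).

(** The spectral matrix U(u, lambda), indices 0,1,2 standing for 1,2,3. *)
Definition Umat (q r lam : R) : 'M[R]_3 :=
  \matrix_(i < 3, k < 3)
    (if (val i == 0%N) && (val k == 0%N) then - 2 * lam
     else if (val i == 0%N) && (val k == 1%N) then Num.sqrt 2 * q
     else if (val i == 1%N) && (val k == 0%N) then Num.sqrt 2 * r
     else if (val i == 1%N) && (val k == 2%N) then Num.sqrt 2 * q
     else if (val i == 2%N) && (val k == 1%N) then Num.sqrt 2 * r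
     else if (val i == 2%N) && (val k == 2%N) then 2 * lam
     else 0).

(** Phase-space point: phi i j = phi_{i+1, j+1}, psi i j = psi_{i+1, j+1}. *)
Definition phase (N : nat) := ('I_3 -> 'I_N -> R)%type.

Definition qtil (N : nat) (mu : 'I_N -> R) (phi psi : phase N) : R :=
  Num.sqrt 2 * (\sum_(j < N) phi 0 j * (mu j * psi 1 j)
               + \sum_(j < N) phi 1 j * (mu j * psi 2 j)).
Definition rtil (N : nat) (mu : 'I_N -> R) (phi psi : phase N) : R :=
  Num.sqrt 2 * (\sum_(j < N) phi 1 j * (mu j * psi 0 j)
               + \sum_(j < N) phi 2 j * (mu j * psi 1 j)).

Definition spatial_solution (N : nat) (lam mu : 'I_N -> R)
    (phi psi : R -> phase N) (x0 x1 : R) : Prop :=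
  forall x, x0 < x < x1 ->
  let U := fun j => Umat (qtil mu (phi x) (psi x)) (rtil mu (phi x) (psi x)) (lam j) in
  forall (i : 'I_3) (j : 'I_N),
    derivable (fun t => phi t i j) x 1 /\
    derivable (fun t => psi t i j) x 1 /\
    derive1 (fun t => phi t i j) x = \sum_(k < 3) U j i k * phi x k j /\
    derive1 (fun t => psi t i j) x = - \sum_(k < 3) (U j)^T i k * psi x k j.

Definition integral_of_motion (N : nat) (lam mu : 'I_N -> R) (F : phase N -> phase N -> R) : Prop :=
  forall (phi psi : R -> phase N) (x0 x1 : R),
    spatial_solution lam mu phi psi x0 x1 ->
    forall x y, x0 < x < x1 -> x0 < y < x1 ->
      F (phi x) (psi x) = F (phi y) (psi y).

End DiffPoly.

From HB Require Import structures.
From mathcomp Require Import all_boot all_order all_algebra.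
From mathcomp Require Import all_classical all_reals all_analysis.
From mathcomp Require Import ring.
Set Implicit Arguments. Unset Strict Implicit. Unset Printing Implicit Defensive.
Import Order.TTheory GRing.Theory Num.Theory.
Local Open Scope ring_scope.

(* Along solutions of the nonlinearized system the moments
     A_m = sum_j mu_j lam_j^m (phi_1j psi_1j - phi_3j psi_3j),
     B_m = sqrt2 sum_j mu_j lam_j^m (phi_1j psi_2j + phi_2j psi_3j),
     C_m = sqrt2 sum_j mu_j lam_j^m (phi_2j psi_1j + phi_3j psi_2j)
   obey the AKNS recursion  A_m' = q C_m - r B_m,  B_m' = -2 B_(m+1) - 2 q A_m,
   C_m' = 2 C_(m+1) + 2 r A_m,  exactly as (a_(m+1), b_(m+1), c_(m+1)) do.  Every solution of
   this recursion is a combination of the normalised one with x-independent coefficients: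
   B_m = sum_(l <= m+1) gamma_l b_(m+1-l), where gamma is the power-series quotient of A by a.
   The polynomial prod_j (X - lam_j) = sum_m sigma_m X^m annihilates the moments, and regrouping
   sum_m sigma_m B_m = 0 gives sum_(k <= N) alpha_k b_(k+1) = 0 with the conserved quantities
   alpha_k = sum_(m >= k) sigma_m gamma_(m-k), alpha_N = 1; likewise for c.
   Derivatives along the flow are handled symbolically: polynomial expressions in the phase
   coordinates carry a Leibniz derivation that agrees with d/dx on every solution. *)

Lemma is_derive_affine (R : realType) (a w t0 : R) :
  is_derive t0 1 (fun t => a + t * w) w.
Proof.
apply: is_derive_eq (is_deriveD (is_derive_cst a t0 1)
  (is_deriveM (is_derive_id t0 1) (is_derive_cst w t0 1))) _.
by rewrite /= scaler0 !add0r; exact: mulr1.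
Qed.

Lemma is_derive0_itvoo_cst (R : realType) (f : R -> R) (x0 x1 x y : R) :
  (forall t, x0 < t < x1 -> is_derive t 1 f 0) ->
  x0 < x < x1 -> x0 < y < x1 -> f x = f y.
Proof.
move=> f'0.
wlog xy : x y / x <= y.
  by move=> W Hx Hy; case: (leP x y) => [|/ltW] xy; [|apply/esym]; apply: W.
move=> /andP[x0x xx1] /andP[x0y yx1].
have f'xy t : t \in `[x, y] -> is_derive t 1 f 0.
  rewrite in_itv /= => /andP[xt ty]; apply: f'0.
  by rewrite (lt_le_trans x0x xt) (le_lt_trans ty yx1).
have fcont := derivable_within_continuous
  (fun t tI => @ex_derive _ _ _ _ _ _ _ (f'xy t tI)).
have [z _] := MVT_segment xy (fun t tI => f'xy t (subset_itv_oo_cc tI)) fcont.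
by rewrite mul0r => /eqP; rewrite subr_eq0 => /eqP.
Qed.

Lemma exchange_conv (T : pzSemiRingType) (n : nat) (s g u : nat -> T) :
  \sum_(m < n) s m * \sum_(l < m.+1) g l * u (m - l)%N =
  \sum_(k < n) (\sum_(m < n) (if (k <= m)%N then s m else 0) * g (m - k)%N) * u k.
Proof.
under [RHS]eq_bigr do rewrite mulr_suml.
rewrite exchange_big /=; apply: eq_bigr => m _.
rewrite mulr_sumr (reindex_inj rev_ord_inj) /=.
under eq_bigr => k _ do rewrite subSS subKn -1?ltnS //.
rewrite (big_ord_widen n (fun k => s m * (g (m - k)%N * u k))) ?ltn_ord //.
by rewrite big_mkcond; apply: eq_bigr => k _; rewrite ltnS; case: ifP; rewrite ?mul0r ?mulrA.
Qed.

Lemma sum_ord3 (T : nmodType) (F : 'I_3 -> T) : \sum_(k < 3) F k = F 0 + F 1 + F 2.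
Proof.
rewrite !big_ord_recr big_ord0 /= add0r.
by congr (F _ + F _ + F _); apply: val_inj.
Qed.

Lemma sum_recr_monic_eq0 (T : comPzRingType) (n : nat) (f g : nat -> T) (k : T) :
  f n = 1 -> \sum_(i < n.+1) f i * g i = 0 -> k * g n + \sum_(i < n) f i * (k * g i) = 0.
Proof.
rewrite big_ord_recr /= => -> S.
transitivity (k * (\sum_(i < n) f i * g i + 1 * g n)); last by rewrite S mulr0.
rewrite mulrDr mulr_sumr mul1r addrC; congr (_ + _).
by apply: eq_bigr => i _; ring.
Qed.

Lemma size_prod_XsubC_ord (R : comNzRingType) (n : nat) (lam : 'I_n -> R) :
  size (\prod_(k < n) ('X - (lam k)%:P)) = n.+1.
Proof. by rewrite size_prod_XsubC /index_enum -enumT size_enum_ord. Qed.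

Lemma coef_prod_XsubC_ord (R : comNzRingType) (n : nat) (lam : 'I_n -> R) :
  (\prod_(k < n) ('X - (lam k)%:P))`_n = 1.
Proof.
have /monicP := monic_prod_XsubC (index_enum 'I_n) xpredT lam.
by rewrite lead_coefE size_prod_XsubC_ord.
Qed.

Lemma sum_coef_prod_XsubC (R : comNzRingType) (n : nat) (lam : 'I_n -> R) (j : 'I_n) :
  \sum_(m < n.+1) (\prod_(k < n) ('X - (lam k)%:P))`_m * lam j ^+ m = 0.
Proof.
rewrite -horner_coef_wide ?size_prod_XsubC_ord //.
by rewrite horner_prod (bigD1 j) //= hornerXsubC subrr mul0r.
Qed.

Section PolynomialExpressions.
Variables (R : realType) (V : Type).

Inductive pexpr : Type :=
| PCst of R
| PVar of V
| PAdd of pexpr & pexpr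
| PMul of pexpr & pexpr
| PSum (n : nat) of ('I_n -> pexpr).
Arguments PSum {n}.

Fixpoint peval (e : pexpr) (v : V -> R) : R :=
  match e with
  | PCst c => c
  | PVar x => v x
  | PAdd e1 e2 => peval e1 v + peval e2 v
  | PMul e1 e2 => peval e1 v * peval e2 v
  | PSum n F => \sum_(i < n) peval (F i) v
  end.

Variable d : V -> pexpr.

Fixpoint pder (e : pexpr) : pexpr :=
  match e with
  | PCst _ => PCst 0
  | PVar x => d x
  | PAdd e1 e2 => PAdd (pder e1) (pder e2)
  | PMul e1 e2 => PAdd (PMul (pder e1) e2) (PMul e1 (pder e2))
  | PSum n F => PSum (fun i => pder (F i))
  end.

Lemma is_derive_peval (c : R -> V -> R) (t0 : R) :
  (forall x, is_derive t0 1 (c^~ x) (peval (d x) (c t0))) ->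
  forall e, is_derive t0 1 (fun t => peval e (c t)) (peval (pder e) (c t0)).
Proof.
move=> c'; elim=> [k|x|e1 IH1 e2 IH2|e1 IH1 e2 IH2|n F IHF] /=.
- exact: is_derive_cst.
- exact: c'.
- exact: is_deriveD IH1 IH2.
- apply: is_derive_eq (is_deriveM IH1 IH2) _.
  by rewrite /= addrC [_ *: _]mulrC.
- by rewrite -[fun t => _]fct_sumE; apply: is_derive_sum.
Qed.

(* [pder e] is the derivative of [peval e] along every curve with velocity [d];
   take the straight line through [v]. *)
Lemma pder_ext (e1 e2 : pexpr) : peval e1 =1 peval e2 -> peval (pder e1) =1 peval (pder e2).
Proof.
move=> e12 v.
pose c t x := v x + t * peval (d x) v.
have c0 : c 0 = v by apply/funext => x; rewrite /c mul0r addr0.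
have c' x : is_derive (0 : R) 1 (c^~ x) (peval (d x) (c 0)).
  by rewrite c0; apply: is_derive_affine.
have := is_derive_peval c' e1; have := is_derive_peval c' e2.
by rewrite c0 -(funext (fun t => e12 (c t))) => -[_ <-] [_ <-].
Qed.

End PolynomialExpressions.

Arguments PCst {R V}.
Arguments PVar {R V}.

Section AknsRecursion.
Variables (R : realType) (V : Type) (d : V -> pexpr R V) (q r : pexpr R V).
Local Notation D := (pder d).

Definition akns_chain (x y z : nat -> pexpr R V) : Prop :=
  forall v i, [/\
    peval (D (x i)) v = peval q v * peval (z i) v - peval r v * peval (y i) v,
    peval (D (y i)) v = - 2 * (peval (y i.+1) v + peval q v * peval (x i) v) &
    peval (D (z i)) v = 2 * (peval (z i.+1) v + peval r v * peval (x i) v)].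

Definition pconv (g u : nat -> pexpr R V) (m : nat) : pexpr R V :=
  PSum (fun l : 'I_m.+1 => PMul (g l) (u (m - l)%N)).

Lemma pder_pconv (g u : nat -> pexpr R V) m v :
  peval (D (pconv g u m)) v =
  \sum_(l < m.+1) (peval (D (g l)) v * peval (u (m - l)%N) v
                   + peval (g l) v * peval (D (u (m - l)%N)) v).
Proof. by []. Qed.

Variables (x y z X Y Z : nat -> pexpr R V).
Hypothesis chain_xyz : akns_chain x y z.
Hypothesis chain_XYZ : akns_chain X Y Z.
Hypothesis x0 : forall v, peval (x 0) v = -1.
Hypothesis y0 : forall v, peval (y 0) v = 0.
Hypothesis z0 : forall v, peval (z 0) v = 0.
Hypothesis Y0 : forall v, peval (Y 0) v = 0.
Hypothesis Z0 : forall v, peval (Z 0) v = 0.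

(* The coefficients of the power series X / x, computed by long division since x 0 = -1. *)
Definition quot_coef_step (m : nat) (gs : seq (pexpr R V)) : pexpr R V :=
  PAdd (PSum (fun l : 'I_m => PMul (nth (PCst 0) gs l) (x (m - l)%N)))
       (PMul (PCst (-1)) (X m)).

Fixpoint quot_coefs (m : nat) : seq (pexpr R V) :=
  if m is m'.+1 then rcons (quot_coefs m') (quot_coef_step m' (quot_coefs m')) else [::].

Definition quot_coef (m : nat) : pexpr R V := locked (quot_coef_step m (quot_coefs m)).

Lemma nth_quot_coefs m l : (l < m)%N -> nth (PCst 0) (quot_coefs m) l = quot_coef l.
Proof.
have size_coefs k : size (quot_coefs k) = k by elim: k => //= k IH; rewrite size_rcons IH.
elim: m => // m IH; rewrite ltnS leq_eqVlt => /orP[/eqP->|lm] /=.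
  by rewrite nth_rcons size_coefs ltnn eqxx /quot_coef -lock.
by rewrite nth_rcons size_coefs lm IH.
Qed.

Lemma peval_quot_coef0 v : peval (quot_coef 0) v = - peval (X 0) v.
Proof. by rewrite /quot_coef -lock /= big_ord0 add0r mulN1r. Qed.

Lemma pconv_quot_coef m : peval (pconv quot_coef x m) =1 peval (X m).
Proof.
move=> v; rewrite /= big_ord_recr /= subnn x0 [in X in _ + X * _]/quot_coef -lock /=.
under [in X in _ + X]eq_bigr => l _ do rewrite nth_quot_coefs //.
by ring.
Qed.

Lemma pder_quot_coef m :
  (forall l, (l < m)%N -> peval (D (quot_coef l)) =1 fun=> 0) ->
  peval (Y m) =1 peval (pconv quot_coef y m) ->
  peval (Z m) =1 peval (pconv quot_coef z m) ->
  peval (D (quot_coef m)) =1 fun=> 0.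
Proof.
move=> const_l Ym Zm v.
have := pder_ext d (pconv_quot_coef m) v.
rewrite pder_pconv big_split.
have -> : \sum_(l < m.+1) peval (quot_coef l) v * peval (D (x (m - l)%N)) v =
    peval q v * peval (pconv quot_coef z m) v - peval r v * peval (pconv quot_coef y m) v.
  rewrite /= !mulr_sumr -sumrB; apply: eq_bigr => l _.
  by have [-> _ _] := chain_xyz v (m - l)%N; ring.
rewrite -Ym -Zm; have [-> _ _] := chain_XYZ v m.
rewrite big_ord_recr big1 => [|l _]; last by rewrite const_l //= mul0r.
by rewrite /= subnn x0 -[RHS]add0r => /addIr /eqP; rewrite add0r mulrN1 oppr_eq0 => /eqP.
Qed.

Lemma pconv_quot_coef_succ (e : R) (p : pexpr R V) (w W : nat -> pexpr R V) m :
  e != 0 -> (forall v, peval (w 0) v = 0) ->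
  (forall v i, peval (D (w i)) v = e * (peval (w i.+1) v + peval p v * peval (x i) v)) ->
  (forall v, peval (D (W m)) v = e * (peval (W m.+1) v + peval p v * peval (X m) v)) ->
  (forall l, (l <= m)%N -> peval (D (quot_coef l)) =1 fun=> 0) ->
  peval (W m) =1 peval (pconv quot_coef w m) ->
  peval (W m.+1) =1 peval (pconv quot_coef w m.+1).
Proof.
move=> e0 w0 w' W' const_l Wm v.
have := pder_ext d Wm v.
rewrite W' pder_pconv -(pconv_quot_coef m v) /=.
under [X in _ = X -> _]eq_bigr => l _ do rewrite const_l -1?ltnS //= mul0r add0r w'.
rewrite [in X in _ -> _ = X]big_ord_recr /= subnn w0 mulr0 addr0.
have -> : \sum_(l < m.+1) peval (quot_coef l) v *
            (e * (peval (w (m - l)%N.+1) v + peval p v * peval (x (m - l)%N) v)) =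
          e * (\sum_(l < m.+1) peval (quot_coef l) v * peval (w (m.+1 - l)%N) v
               + peval p v * \sum_(l < m.+1) peval (quot_coef l) v * peval (x (m - l)%N) v).
  rewrite mulrDr !mulr_sumr -big_split; apply: eq_bigr => l _.
  by rewrite subSn -1?ltnS //=; ring.
by move/(mulfI e0)/addIr.
Qed.

Lemma akns_chain_pconv :
  (forall m, peval (D (quot_coef m)) =1 fun=> 0) /\
  (forall m, peval (Y m) =1 peval (pconv quot_coef y m)) /\
  (forall m, peval (Z m) =1 peval (pconv quot_coef z m)).
Proof.
suff conv_m m : [/\ forall l, (l < m)%N -> peval (D (quot_coef l)) =1 fun=> 0,
                    peval (Y m) =1 peval (pconv quot_coef y m) &
                    peval (Z m) =1 peval (pconv quot_coef z m)].
  split; last split; move=> m; have [const_l Ym Zm] := conv_m m => //.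
  exact: pder_quot_coef.
elim: m => [|m [const_l Ym Zm]].
  by split=> // v; rewrite /= big_ord1 /= ?Y0 ?y0 ?Z0 ?z0 mulr0.
have const_le l : (l <= m)%N -> peval (D (quot_coef l)) =1 fun=> 0.
  rewrite leq_eqVlt => /orP[/eqP->|]; last exact: const_l.
  exact: pder_quot_coef.
have two0 : (2 : R) != 0 by rewrite pnatr_eq0.
split.
- by move=> l; rewrite ltnS; apply: const_le.
- apply: (pconv_quot_coef_succ (e := -2) (p := q)) => //; rewrite ?oppr_eq0 //.
  + by move=> v i; have [_ -> _] := chain_xyz v i.
  + by move=> v; have [_ -> _] := chain_XYZ v m.
- apply: (pconv_quot_coef_succ (e := 2) (p := r)) => //.
  + by move=> v i; have [_ _ ->] := chain_xyz v i.
  + by move=> v; have [_ _ ->] := chain_XYZ v m.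
Qed.

End AknsRecursion.

Section NonlinearizedSystem.
Variables (R : realType) (N : nat) (lam mu : 'I_N -> R).

Inductive coord : Type := Phi of 'I_3 & 'I_N | Psi of 'I_3 & 'I_N.

Definition coords (p s : phase R N) (c : coord) : R :=
  match c with Phi i j => p i j | Psi i j => s i j end.

Local Notation pexpr := (pexpr R coord).

Definition pairing (i k : 'I_3) : pexpr :=
  PSum (fun j => PMul (PVar (Phi i j)) (PMul (PCst (mu j)) (PVar (Psi k j)))).

Definition qexpr : pexpr := PMul (PCst (Num.sqrt 2)) (PAdd (pairing 0 1) (pairing 1 2)).
Definition rexpr : pexpr := PMul (PCst (Num.sqrt 2)) (PAdd (pairing 1 0) (pairing 2 1)).

Lemma Umat_affine (q r l : R) (i k : 'I_3) :
  Umat q r l i k = Umat 0 0 l i k + Umat 1 0 0 i k * q + Umat 0 1 0 i k * r.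
Proof.
rewrite !mxE; case: i k => [[|[|[|i]]] Hi] [[|[|[|k]]] Hk] //=; ring.
Qed.

Definition Uexpr (j : 'I_N) (i k : 'I_3) : pexpr :=
  PAdd (PCst (Umat 0 0 (lam j) i k))
    (PAdd (PMul (PCst (Umat 1 0 0 i k)) qexpr) (PMul (PCst (Umat 0 1 0 i k)) rexpr)).

Lemma peval_Uexpr j i k v :
  peval (Uexpr j i k) v = Umat (peval qexpr v) (peval rexpr v) (lam j) i k.
Proof. by rewrite [RHS]Umat_affine /= addrA. Qed.

Definition spatial_field : coord -> pexpr := locked (fun c =>
  match c with
  | Phi i j => PSum (fun k : 'I_3 => PMul (Uexpr j i k) (PVar (Phi k j)))
  | Psi i j => PMul (PCst (-1)) (PSum (fun k : 'I_3 => PMul (Uexpr j k i) (PVar (Psi k j))))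
  end).

Local Notation lie := (pder spatial_field).

Lemma peval_field_Phi i j v : peval (spatial_field (Phi i j)) v =
  \sum_(k < 3) Umat (peval qexpr v) (peval rexpr v) (lam j) i k * v (Phi k j).
Proof. by under [RHS]eq_bigr do rewrite -peval_Uexpr; rewrite /spatial_field -lock. Qed.

Lemma peval_field_Psi i j v : peval (spatial_field (Psi i j)) v =
  - \sum_(k < 3) Umat (peval qexpr v) (peval rexpr v) (lam j) k i * v (Psi k j).
Proof.
by rewrite -mulN1r; under [in RHS]eq_bigr do rewrite -peval_Uexpr; rewrite /spatial_field -lock.
Qed.

Fixpoint of_dpoly (e : dpoly R) : pexpr :=
  match e with
  | DC c => PCst c
  | DQ k => iter k lie qexpr
  | DR k => iter k lie rexpr
  | DAdd e1 e2 => PAdd (of_dpoly e1) (of_dpoly e2)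
  | DMul e1 e2 => PMul (of_dpoly e1) (of_dpoly e2)
  end.

Definition coord_jet (v : coord -> R) : jet R :=
  (fun k => peval (iter k lie qexpr) v, fun k => peval (iter k lie rexpr) v).

Lemma peval_of_dpoly e v : peval (of_dpoly e) v = deval (coord_jet v) e.
Proof. by elim: e => //= e1 -> e2 ->. Qed.

Lemma of_dpoly_dderiv e : of_dpoly (dderiv e) = lie (of_dpoly e).
Proof. by elim: e => //= e1 -> e2 ->. Qed.

Section Solution.
Variables (phi psi : R -> phase R N) (x0 x1 : R).
Hypothesis sol : spatial_solution lam mu phi psi x0 x1.

Lemma is_derive_solution x e : x0 < x < x1 ->
  is_derive x 1 (fun t => peval e (coords (phi t) (psi t)))
    (peval (lie e) (coords (phi x) (psi x))).
Proof.
move=> xI; apply: is_derive_peval => -[] i j; have [phi' [psi' [phiE psiE]]] := sol xI i j.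
- by rewrite peval_field_Phi -phiE derive1E; apply: derivableP.
- move: psiE; under eq_bigr do rewrite mxE.
  move=> psiE.
  by rewrite peval_field_Psi -psiE derive1E; apply: derivableP.
Qed.

Lemma derive1n_solution e k x : x0 < x < x1 ->
  derive1n k (fun t => peval e (coords (phi t) (psi t))) x =
  peval (iter k lie e) (coords (phi x) (psi x)).
Proof.
elim: k x => [//|k IH] x xI.
rewrite /= derive1E
  (@near_eq_derive _ _ _ _ (fun t => peval (iter k lie e) (coords (phi t) (psi t)))).
  by have [_ ->] := is_derive_solution (iter k lie e) xI.
have xI' : x \in `]x0, x1[ by rewrite in_itv.
by apply: filterS (near_in_itvoo xI') => t; rewrite in_itv; apply: IH.
Qed.

Lemma jet_at_solution x : x0 < x < x1 ->
  jet_at (fun t => qtil mu (phi t) (psi t)) (fun t => rtil mu (phi t) (psi t)) x =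
  coord_jet (coords (phi x) (psi x)).
Proof.
by move=> xI; congr pair; apply/funext => k; rewrite -derive1n_solution.
Qed.

End Solution.

Lemma integral_of_motion_pder0 (e : pexpr) :
  peval (lie e) =1 (fun=> 0) -> integral_of_motion lam mu (fun p s => peval e (coords p s)).
Proof.
move=> e'0 phi psi x0 x1 sol x y xI yI.
apply: (is_derive0_itvoo_cst (f := fun t => peval e (coords (phi t) (psi t))) _ xI yI) => t tI.
by have := is_derive_solution sol e tI; rewrite e'0.
Qed.

Definition Aexpr (j : 'I_N) : pexpr :=
  PAdd (PMul (PVar (Phi 0 j)) (PVar (Psi 0 j)))
       (PMul (PCst (-1)) (PMul (PVar (Phi 2 j)) (PVar (Psi 2 j)))).
Definition Bexpr (j : 'I_N) : pexpr :=
  PMul (PCst (Num.sqrt 2))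
    (PAdd (PMul (PVar (Phi 0 j)) (PVar (Psi 1 j))) (PMul (PVar (Phi 1 j)) (PVar (Psi 2 j)))).
Definition Cexpr (j : 'I_N) : pexpr :=
  PMul (PCst (Num.sqrt 2))
    (PAdd (PMul (PVar (Phi 1 j)) (PVar (Psi 0 j))) (PMul (PVar (Phi 2 j)) (PVar (Psi 1 j)))).

Lemma pder_Aexpr j v :
  peval (lie (Aexpr j)) v = peval qexpr v * peval (Cexpr j) v - peval rexpr v * peval (Bexpr j) v.
Proof.
by rewrite /= !peval_field_Phi !peval_field_Psi !sum_ord3 !mxE /=; ring.
Qed.

Lemma sqrt2_mul : Num.sqrt 2 * Num.sqrt 2 = 2 :> R.
Proof. by rewrite -expr2 sqr_sqrtr // ler0n. Qed.

Lemma pder_Bexpr j v :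
  peval (lie (Bexpr j)) v =
  - 2 * (lam j * peval (Bexpr j) v + peval qexpr v * peval (Aexpr j) v).
Proof.
transitivity (- 2 * lam j * peval (Bexpr j) v
              - Num.sqrt 2 * Num.sqrt 2 * peval qexpr v * peval (Aexpr j) v).
  by rewrite /= !peval_field_Phi !peval_field_Psi !sum_ord3 !mxE /=; ring.
by rewrite sqrt2_mul; ring.
Qed.

Lemma pder_Cexpr j v :
  peval (lie (Cexpr j)) v =
  2 * (lam j * peval (Cexpr j) v + peval rexpr v * peval (Aexpr j) v).
Proof.
transitivity (2 * lam j * peval (Cexpr j) v
              + Num.sqrt 2 * Num.sqrt 2 * peval rexpr v * peval (Aexpr j) v).
  by rewrite /= !peval_field_Phi !peval_field_Psi !sum_ord3 !mxE /=; ring.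
by rewrite sqrt2_mul; ring.
Qed.

Definition moment (E : 'I_N -> pexpr) (m : nat) : pexpr :=
  PSum (fun j => PMul (PCst (mu j * lam j ^+ m)) (E j)).

Lemma peval_moment E m v :
  peval (moment E m) v = \sum_j mu j * lam j ^+ m * peval (E j) v.
Proof. by []. Qed.

Lemma pder_moment E m v :
  peval (lie (moment E m)) v = \sum_j mu j * lam j ^+ m * peval (lie (E j)) v.
Proof. by apply: eq_bigr => j _ /=; rewrite mul0r add0r. Qed.

Lemma moment_B0 v : peval (moment Bexpr 0) v = peval qexpr v.
Proof. by rewrite /= -big_split mulr_sumr; apply: eq_bigr => j _ /=; ring. Qed.

Lemma moment_C0 v : peval (moment Cexpr 0) v = peval rexpr v.
Proof. by rewrite /= -big_split mulr_sumr; apply: eq_bigr => j _ /=; ring. Qed.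

(* The moments, shifted by one and preceded by the normalisation (-1, 0, 0) of (a_0, b_0, c_0). *)
Definition lax (E : 'I_N -> pexpr) (c : R) (m : nat) : pexpr :=
  if m is m'.+1 then moment E m' else PCst c.

Lemma akns_chain_lax :
  akns_chain spatial_field qexpr rexpr (lax Aexpr (-1)) (lax Bexpr 0) (lax Cexpr 0).
Proof.
move=> v [|m].
  by split; rewrite ?moment_B0 ?moment_C0 /=; ring.
split; rewrite pder_moment.
- under eq_bigr do rewrite pder_Aexpr.
  by rewrite !peval_moment !mulr_sumr -sumrB; apply: eq_bigr => j _; ring.
- under eq_bigr do rewrite pder_Bexpr.
  rewrite !peval_moment mulrDr !mulr_sumr -big_split.
  by apply: eq_bigr => j _; rewrite exprS /=; ring.
- under eq_bigr do rewrite pder_Cexpr.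
  rewrite !peval_moment mulrDr !mulr_sumr -big_split.
  by apply: eq_bigr => j _; rewrite exprS /=; ring.
Qed.

Definition spectral_poly : {poly R} := \prod_(k < N) ('X - (lam k)%:P).

Lemma moment_annihilated E v :
  \sum_(m < N.+1) spectral_poly`_m * peval (moment E m) v = 0.
Proof.
under eq_bigr do rewrite peval_moment mulr_sumr.
rewrite exchange_big big1 // => j _.
transitivity (mu j * peval (E j) v * \sum_(m < N.+1) spectral_poly`_m * lam j ^+ m).
  by rewrite mulr_sumr; apply: eq_bigr => m _; ring.
by rewrite sum_coef_prod_XsubC mulr0.
Qed.

Section Hierarchy.
Variables a b c : nat -> dpoly R.
Hypothesis hier : AKNS_hierarchy a b c.

Lemma akns_chain_hierarchy :
  akns_chain spatial_field qexpr rexpr (fun i => of_dpoly (a i)) (fun i => of_dpoly (b i))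
    (fun i => of_dpoly (c i)).
Proof.
have [a0 [b0 [c0 hierS]]] := hier.
have b' v i : peval (lie (of_dpoly (b i))) v =
    - 2 * (peval (of_dpoly (b i.+1)) v + peval qexpr v * peval (of_dpoly (a i)) v).
  have [_ [bS _]] := hierS i.
  by rewrite -of_dpoly_dderiv !peval_of_dpoly bS /=; field.
have c' v i : peval (lie (of_dpoly (c i))) v =
    2 * (peval (of_dpoly (c i.+1)) v + peval rexpr v * peval (of_dpoly (a i)) v).
  have [_ [_ [cS _]]] := hierS i.
  by rewrite -of_dpoly_dderiv !peval_of_dpoly cS /=; field.
move=> v [|i]; split=> //.
  rewrite !peval_of_dpoly b0 c0 !mulr0 subrr.
  rewrite (@pder_ext _ _ _ _ (PCst (-1))) //= => w.
  by rewrite peval_of_dpoly a0.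
have [aS _] := hierS i.
rewrite -of_dpoly_dderiv !peval_of_dpoly aS.
rewrite -!peval_of_dpoly !of_dpoly_dderiv b' c' /=.
by field.
Qed.

Local Notation gamma := (quot_coef (fun i => of_dpoly (a i)) (lax Aexpr (-1))).

Lemma akns_hierarchy_conv :
  (forall m, peval (lie (gamma m)) =1 fun=> 0) /\
  (forall m, peval (lax Bexpr 0 m) =1 peval (pconv gamma (fun i => of_dpoly (b i)) m)) /\
  (forall m, peval (lax Cexpr 0 m) =1 peval (pconv gamma (fun i => of_dpoly (c i)) m)).
Proof.
have [a0 [b0 [c0 _]]] := hier.
apply: akns_chain_pconv akns_chain_hierarchy akns_chain_lax _ _ _ _ _ => // v;
  by rewrite peval_of_dpoly ?a0 ?b0 ?c0.
Qed.

Definition invariant (k : nat) : pexpr :=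
  PSum (fun m : 'I_N.+1 =>
    PMul (PCst (if (k <= m)%N then spectral_poly`_m else 0)) (gamma (m - k)%N)).

Lemma pder_invariant k : peval (lie (invariant k)) =1 fun=> 0.
Proof.
have [gamma'0 _] := akns_hierarchy_conv.
by move=> v /=; apply: big1 => m _; rewrite gamma'0 /= mul0r mulr0 addr0.
Qed.

Lemma peval_invariantN v : peval (invariant N) v = 1.
Proof.
rewrite /= big_ord_recr /= big1 => [|m _]; last by rewrite leqNgt ltn_ord mul0r.
by rewrite leqnn subnn peval_quot_coef0 /= coef_prod_XsubC_ord opprK mulr1 add0r.
Qed.

Lemma sum_invariant_mul (w W : nat -> pexpr) (E : 'I_N -> pexpr) v :
  peval (w 0) v = 0 -> (forall m, peval (W m) v = peval (pconv gamma w m) v) ->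
  (forall m, W m.+1 = moment E m) ->
  \sum_(k < N.+1) peval (invariant k) v * peval (w k.+1) v = 0.
Proof.
move=> w0 WE WS; rewrite -[RHS](moment_annihilated E v).
under [RHS]eq_bigr => m _ do rewrite -WS WE /= big_ord_recr /= subnn w0 mulr0 addr0.
under [RHS]eq_bigr => m _ do under eq_bigr => l _ do rewrite subSn -1?ltnS //.
by rewrite (exchange_conv N.+1 (fun m => spectral_poly`_m) (fun l => peval (gamma l) v)
  (fun k => peval (w k.+1) v)).
Qed.

Lemma invariant_stationary v :
  \sum_(k < N.+1) peval (invariant k) v * deval (coord_jet v) (b k.+1) = 0 /\
  \sum_(k < N.+1) peval (invariant k) v * deval (coord_jet v) (c k.+1) = 0.
Proof.
have [a0 [b0 [c0 _]]] := hier; have [_ [Bconv Cconv]] := akns_hierarchy_conv.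
split; under eq_bigr do rewrite -peval_of_dpoly.
- apply: (sum_invariant_mul (E := Bexpr) _ (fun m => Bconv m v)) => //.
  by rewrite peval_of_dpoly b0.
- apply: (sum_invariant_mul (E := Cexpr) _ (fun m => Cconv m v)) => //.
  by rewrite peval_of_dpoly c0.
Qed.

End Hierarchy.

End NonlinearizedSystem.

Theorem theorem4p2 (R : realType) (N : nat) (lam mu : 'I_N -> R)
    (a b c : nat -> dpoly R) :
  (1 <= N)%N ->
  injective lam ->
  (forall j, mu j != 0) ->
  AKNS_hierarchy a b c ->
  exists alpha : 'I_N -> (phase R N -> phase R N -> R),
    (forall k, integral_of_motion lam mu (alpha k)) /\
    forall (phi psi : R -> phase R N) (x0 x1 : R),
      spatial_solution lam mu phi psi x0 x1 ->
      let q := fun x => qtil mu (phi x) (psi x) in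
      let r := fun x => rtil mu (phi x) (psi x) in
      forall x, x0 < x < x1 ->
        K1 b N (jet_at q r x)
          + \sum_(k < N) alpha k (phi x) (psi x) * K1 b k (jet_at q r x) = 0 /\
        K2 c N (jet_at q r x)
          + \sum_(k < N) alpha k (phi x) (psi x) * K2 c k (jet_at q r x) = 0.
Proof.
move=> _ _ _ hier.
exists (fun k p s => peval (invariant lam mu a k) (coords p s)); split.
  by move=> k; apply/integral_of_motion_pder0/(pder_invariant lam mu hier).
move=> phi psi x0 x1 sol q r x xI; rewrite /q /r (jet_at_solution sol xI) /K1 /K2.
set v := coords (phi x) (psi x).
have [Bsum Csum] := invariant_stationary lam mu hier v.
have combination w k := @sum_recr_monic_eq0 _ N (fun k => peval (invariant lam mu a k) v)
  (fun k => deval (coord_jet lam mu v) (w k.+1)) k (peval_invariantN lam mu a v).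
by split; [exact: combination b (-2) Bsum | exact: combination c 2 Csum].
Qed.
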